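(* Let $\mathbb{P}$ be any of the fifteen preferential conditional logics $\mathbb{PCL}$, $\mathbb{PN}$, $\mathbb{PT}$, $\mathbb{PW}$, $\mathbb{PC}$, $\mathbb{PU}$, $\mathbb{PNU}$, $\mathbb{PTU}$, $\mathbb{PWU}$, $\mathbb{PCU}$, $\mathbb{PA}$, $\mathbb{PNA}$, $\mathbb{PTA}$, $\mathbb{PWA}$, $\mathbb{PCA}$, with axiom system as described in the context, and let $\mathcal{P}$ be the corresponding class of neighbourhood models. For every formula $F$, if $F$ is derivable in the axiom system of $\mathbb{P}$, then $F$ is valid in every model of $\mathcal{P}$.
   Context: Formulas: $\mathcal{L} ::= p \mid \bot \mid A\wedge B \mid A\lor B \mid A\rightarrow B \mid A>B$ with $p$ propositional variables; $\neg A := A\to\bot$, $\top:=\neg\bot$. Axiom systems (over classical propositional logic with modus ponens): $\mathbb{PCL}$ = (RCEA) from $A\leftrightarrow B$ infer $(A>C)\leftrightarrow(B>C)$; (RCK) from $A\rightarrow B$ infer $(C>A)\rightarrow(C>B)$; (ID) $A>A$; (R-And) $(A>B)\wedge(A>C)\rightarrow(A>(B\wedge C))$; (CM) $(A>B)\wedge(A>C)\rightarrow((A\wedge B)>C)$; (OR) $(A>C)\wedge(B>C)\rightarrow((A\lor B)>C)$. Further axioms: (N) $\neg(\top>\bot)$; (T) $A\rightarrow\neg(A>\bot)$; (W) $(A>B)\rightarrow(A\rightarrow B)$; (C) $(A\wedge B)\rightarrow(A>B)$; (U$_1$) $(\neg A>\bot)\rightarrow(\neg(\neg A>\bot)>\bot)$;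 (U$_2$) $\neg(A>\bot)\rightarrow((A>\bot)>\bot)$; (A$_1$) $(A>B)\rightarrow(C>(A>B))$; (A$_2$) $\neg(A>B)\rightarrow(C>\neg(A>B))$. $\mathbb{PN}=\mathbb{PCL}+$(N), $\mathbb{PT}=\mathbb{PN}+$(T), $\mathbb{PW}=\mathbb{PT}+$(W), $\mathbb{PC}=\mathbb{PW}+$(C); $\mathbb{PU}=\mathbb{PCL}+$(U$_1$)+(U$_2$), and $\mathbb{PNU},\mathbb{PTU},\mathbb{PWU},\mathbb{PCU}$ add to $\mathbb{PU}$ respectively (N); (N),(T); (N),(T),(W); (N),(T),(W),(C); $\mathbb{PA}=\mathbb{PCL}+$(A$_1$)+(A$_2$), and $\mathbb{PNA},\dots,\mathbb{PCA}$ analogously. A neighbourhood model is $\langle W,N,\llbracket\cdot\rrbracket\rangle$ with $W\neq\emptyset$, $N:W\to\mathcal{P}(\mathcal{P}(W))$ such that every $\alpha\in N(x)$ is non-empty, and $\llbracket\cdot\rrbracket$ assigns to each atom a subset of $W$. Forcing: $x\Vdash p$ iff $x\in\llbracket p\rrbracket$, Boolean connectives classical, and $x\Vdash A>B$ iff for all $\alpha\in N(x)$, if some $y\in\alpha$ has $y\Vdash A$, then there is $\beta\in N(x)$ with $\beta\subseteq\alpha$, some $y\in\beta$ with $y\Vdash A$, and every $y\in\beta$ satisfies $y\Vdash A\to B$. A formula is valid in a model if forced at every world. Model conditions: normality: $N(x)\neq\emptyset$ for all $x$; total reflexivity: for all $x$ there is $\alpha\in N(x)$ with $x\in\alpha$;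 weak centering: $x\in\alpha$ for all $\alpha\in N(x)$; centering: weak centering and $\{x\}\in N(x)$ for all $x$; uniformity: if $\alpha\in N(x)$ and $y\in\alpha$ then $\bigcup N(x)=\bigcup N(y)$; absoluteness: if $\alpha\in N(x)$ and $y\in\alpha$ then $N(x)=N(y)$. The class corresponding to a logic is the class of neighbourhood models satisfying the conditions named by its letters (N normality, T total reflexivity, W weak centering, C centering, U uniformity, A absoluteness; $\mathbb{PCL}$: all neighbourhood models). *)

From Stdlib Require Import Bool.

Inductive form : Type :=
| Var : nat -> form
| Bot : form
| And : form -> form -> form
| Or  : form -> form -> form
| Imp : form -> form -> form
| Cond : form -> form -> form.

Definition Neg (A : form) : form := Imp A Bot.
Definition Top : form := Neg Bot.
Definition Iff (A B : form) : form := And (Imp A B) (Imp B A).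

(* A boolean valuation treats atoms and conditionals A>B as propositional
   letters and interprets the Boolean connectives classically. *)
Definition bool_valuation (v : form -> bool) : Prop :=
  v Bot = false /\
  (forall A B, v (And A B) = v A && v B) /\
  (forall A B, v (Or A B) = v A || v B) /\
  (forall A B, v (Imp A B) = implb (v A) (v B)).

(* Substitution instances of classical tautologies. *)
Definition tautology (F : form) : Prop :=
  forall v, bool_valuation v -> v F = true.

(* base: PCL, PCL + (U1)+(U2), PCL + (A1)+(A2) *)
Inductive base : Type := BP | BU | BA.
(* extension: none, N, N+T, N+T+W, N+T+W+C *)
Inductive ext : Type := Enone | EN | ET | EW | EC.

Definition hasN (e : ext) : Prop := e <> Enone.
Definition hasT (e : ext) : Prop := e = ET \/ e = EW \/ e = EC.
Definition hasW (e : ext) : Prop := e = EW \/ e = EC.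
Definition hasC (e : ext) : Prop := e = EC.

Inductive derivable (b : base) (e : ext) : form -> Prop :=
| d_taut : forall F, tautology F -> derivable b e F
| d_mp : forall A B, derivable b e (Imp A B) -> derivable b e A -> derivable b e B
| d_RCEA : forall A B C, derivable b e (Iff A B) ->
    derivable b e (Iff (Cond A C) (Cond B C))
| d_RCK : forall A B C, derivable b e (Imp A B) ->
    derivable b e (Imp (Cond C A) (Cond C B))
| d_ID : forall A, derivable b e (Cond A A)
| d_RAnd : forall A B C,
    derivable b e (Imp (And (Cond A B) (Cond A C)) (Cond A (And B C)))
| d_CM : forall A B C,
    derivable b e (Imp (And (Cond A B) (Cond A C)) (Cond (And A B) C))
| d_OR : forall A B C,
    derivable b e (Imp (And (Cond A C) (Cond B C)) (Cond (Or A B) C))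
| d_N : hasN e -> derivable b e (Neg (Cond Top Bot))
| d_T : forall A, hasT e -> derivable b e (Imp A (Neg (Cond A Bot)))
| d_W : forall A B, hasW e -> derivable b e (Imp (Cond A B) (Imp A B))
| d_C : forall A B, hasC e -> derivable b e (Imp (And A B) (Cond A B))
| d_U1 : forall A, b = BU ->
    derivable b e (Imp (Cond (Neg A) Bot) (Cond (Neg (Cond (Neg A) Bot)) Bot))
| d_U2 : forall A, b = BU ->
    derivable b e (Imp (Neg (Cond A Bot)) (Cond (Cond A Bot) Bot))
| d_A1 : forall A B C, b = BA ->
    derivable b e (Imp (Cond A B) (Cond C (Cond A B)))
| d_A2 : forall A B C, b = BA ->
    derivable b e (Imp (Neg (Cond A B)) (Cond C (Neg (Cond A B)))).

Record model : Type := Model {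
  W : Type;
  W_inhabited : inhabited W;
  N : W -> (W -> Prop) -> Prop;
  N_nonempty : forall x alpha, N x alpha -> exists y, alpha y;
  val : nat -> W -> Prop
}.

Fixpoint forces (M : model) (x : W M) (F : form) {struct F} : Prop :=
  match F with
  | Var p => val M p x
  | Bot => False
  | And A B => forces M x A /\ forces M x B
  | Or A B => forces M x A \/ forces M x B
  | Imp A B => forces M x A -> forces M x B
  | Cond A B =>
      forall alpha, N M x alpha ->
        (exists y, alpha y /\ forces M y A) ->
        exists beta, N M x beta /\ (forall y, beta y -> alpha y) /\
          (exists y, beta y /\ forces M y A) /\
          (forall y, beta y -> forces M y A -> forces M y B)
  end.

Definition valid (M : model) (F : form) : Prop := forall x : W M, forces M x F.

Definition normal (M : model) : Prop := forall x, exists alpha, N M x alpha.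
Definition totally_reflexive (M : model) : Prop :=
  forall x, exists alpha, N M x alpha /\ alpha x.
Definition weakly_centered (M : model) : Prop :=
  forall x alpha, N M x alpha -> alpha x.
Definition centered (M : model) : Prop :=
  weakly_centered M /\ forall x, N M x (fun y => y = x).
Definition uniform (M : model) : Prop :=
  forall x alpha y, N M x alpha -> alpha y ->
    forall z, (exists a, N M x a /\ a z) <-> (exists b, N M y b /\ b z).
Definition absolute (M : model) : Prop :=
  forall x alpha y, N M x alpha -> alpha y -> N M x = N M y.

Definition base_cond (b : base) (M : model) : Prop :=
  match b with BP => True | BU => uniform M | BA => absolute M end.

Definition ext_cond (e : ext) (M : model) : Prop :=
  match e with
  | Enone => True
  | EN => normal M
  | ET => normal M /\ totally_reflexive M
  | EW => normal M /\ totally_reflexive M /\ weakly_centered M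
  | EC => normal M /\ totally_reflexive M /\ weakly_centered M /\ centered M
  end.

Definition in_class (b : base) (e : ext) (M : model) : Prop :=
  base_cond b M /\ ext_cond e M.

(** The
    propositional base is handled by reading off, at each world, the boolean
    valuation "is forced here", under which every tautology is true.  The
    axioms of uniformity and absoluteness hold because in those models every
    world [y] in a neighbourhood of [x] sees the same universe (resp. the same
    neighbourhoods) as [x], and the truth of [C > Bot] (resp. of any [A > B])
    at a world depends only on that universe (resp. those neighbourhoods). *)

From Stdlib Require Import Bool Classical ClassicalDescription.

Section Soundness.

Variable M : model.

Definition truth_at (x : W M) (F : form) : bool :=
  if excluded_middle_informative (forces M x F) then true else false.

Lemma truth_at_true x F : truth_at x F = true <-> forces M x F.
Proof.
  unfold truth_at; destruct (excluded_middle_informative _); split; intros;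
    try tauto; discriminate.
Qed.

Lemma truth_at_bool_valuation x : bool_valuation (truth_at x).
Proof.
  split; [apply not_true_iff_false; rewrite truth_at_true; simpl; tauto |].
  split; [| split]; intros; apply eq_iff_eq_true;
    rewrite ?andb_true_iff, ?orb_true_iff, ?implb_true_iff, !truth_at_true;
    simpl; tauto.
Qed.

Lemma valid_tautology F : tautology F -> valid M F.
Proof. intros Htaut x; apply truth_at_true, Htaut, truth_at_bool_valuation. Qed.

Lemma valid_MP A B : valid M (Imp A B) -> valid M A -> valid M B.
Proof. intros HAB HA x; exact (HAB x (HA x)). Qed.

Lemma forces_Cond_Bot x C :
  forces M x (Cond C Bot) <->
  forall alpha y, N M x alpha -> alpha y -> ~ forces M y C.
Proof.
  simpl; split.
  - intros H alpha y Ha Hy HC.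
    destruct (H alpha Ha (ex_intro _ y (conj Hy HC)))
      as [beta [_ [_ [[z [Hz HzC]] Hbeta]]]].
    exact (Hbeta z Hz HzC).
  - intros H alpha Ha [y [Hy HC]]; exfalso; exact (H alpha y Ha Hy HC).
Qed.

Lemma forces_Cond_of_neighbourhoods x C D :
  (forall alpha y, N M x alpha -> alpha y -> forces M y D) ->
  forces M x (Cond C D).
Proof. intros HD alpha Ha HC; exists alpha; repeat split; eauto. Qed.

Lemma forces_Cond_antecedent x A B C :
  (forall y, forces M y A -> forces M y B) ->
  (forall y, forces M y B -> forces M y A) ->
  forces M x (Cond A C) -> forces M x (Cond B C).
Proof.
  intros HAB HBA H alpha Ha [y [Hy HB]].
  destruct (H alpha Ha (ex_intro _ y (conj Hy (HBA y HB))))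
    as [beta [Hbeta [Hsub [[z [Hz HzA]] HC]]]].
  exists beta; repeat split; eauto.
  intros w Hw HwB; exact (HC w Hw (HBA w HwB)).
Qed.

Lemma valid_RCEA A B C :
  valid M (Iff A B) -> valid M (Iff (Cond A C) (Cond B C)).
Proof.
  intros HAB x; split; intro H;
    (eapply forces_Cond_antecedent; [intro y; apply (HAB y) .. | exact H]).
Qed.

Lemma valid_RCK A B C :
  valid M (Imp A B) -> valid M (Imp (Cond C A) (Cond C B)).
Proof.
  intros HAB x H alpha Ha HC.
  destruct (H alpha Ha HC) as [beta [Hbeta [Hsub [HbC HA]]]].
  exists beta; repeat split; auto.
  intros y Hy HyC; exact (HAB y (HA y Hy HyC)).
Qed.

Lemma valid_ID A : valid M (Cond A A).
Proof. intros x alpha Ha HA; exists alpha; repeat split; auto. Qed.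

Lemma valid_RAnd A B C :
  valid M (Imp (And (Cond A B) (Cond A C)) (Cond A (And B C))).
Proof.
  intros x [HB HC] alpha Ha HA.
  destruct (HB alpha Ha HA) as [beta [Hbeta [Hsub [HbA HbB]]]].
  destruct (HC beta Hbeta HbA) as [gamma [Hgamma [Hsub' [HgA HgC]]]].
  exists gamma; split; [exact Hgamma |]; split; [auto |]; split; [exact HgA |].
  intros w Hw HwA; split; [apply HbB | apply HgC]; auto.
Qed.

Lemma valid_CM A B C :
  valid M (Imp (And (Cond A B) (Cond A C)) (Cond (And A B) C)).
Proof.
  intros x [HB HC] alpha Ha [y [Hy [HyA _]]].
  destruct (HB alpha Ha (ex_intro _ y (conj Hy HyA)))
    as [beta [Hbeta [Hsub [HbA HbB]]]].
  destruct (HC beta Hbeta HbA) as [gamma [Hgamma [Hsub' [[z [Hz HzA]] HgC]]]].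
  exists gamma; split; [exact Hgamma |]; split; [auto |]; split.
  - exists z; split; [exact Hz | split; [exact HzA | exact (HbB z (Hsub' z Hz) HzA)]].
  - intros w Hw [HwA _]; exact (HgC w Hw HwA).
Qed.

(* If [A] is satisfiable in [alpha], refine with respect to [A] and then,
   if possible, with respect to [B]; otherwise refine with respect to [B]. *)
Lemma valid_OR A B C :
  valid M (Imp (And (Cond A C) (Cond B C)) (Cond (Or A B) C)).
Proof.
  intros x [HAC HBC] alpha Ha [y [Hy HyAB]].
  destruct (classic (exists y, alpha y /\ forces M y A)) as [HA | HnA].
  - destruct (HAC alpha Ha HA) as [beta [Hbeta [Hsub [[z [Hz HzA]] HbC]]]].
    destruct (classic (exists y, beta y /\ forces M y B)) as [HB | HnB].
    + destruct (HBC beta Hbeta HB)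
        as [gamma [Hgamma [Hsub' [[u [Hu HuB]] HgC]]]].
      exists gamma; split; [exact Hgamma |]; split; [auto |]; split.
      * exists u; split; [exact Hu | right; exact HuB].
      * intros w Hw [HwA | HwB]; [apply HbC | apply HgC]; auto.
    + exists beta; split; [exact Hbeta |]; split; [exact Hsub |]; split.
      * exists z; split; [exact Hz | left; exact HzA].
      * intros w Hw [HwA | HwB]; [apply HbC; auto | exfalso; eauto].
  - destruct HyAB as [HyA | HyB]; [exfalso; eauto |].
    destruct (HBC alpha Ha (ex_intro _ y (conj Hy HyB)))
      as [gamma [Hgamma [Hsub [[u [Hu HuB]] HgC]]]].
    exists gamma; split; [exact Hgamma |]; split; [exact Hsub |]; split.
    + exists u; split; [exact Hu | right; exact HuB].
    + intros w Hw [HwA | HwB]; [exfalso; eauto | apply HgC; auto].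
Qed.

Lemma valid_N : normal M -> valid M (Neg (Cond Top Bot)).
Proof.
  intros Hnormal x H.
  destruct (Hnormal x) as [alpha Ha].
  destruct (N_nonempty M x alpha Ha) as [y Hy].
  refine (proj1 (forces_Cond_Bot x Top) H alpha y Ha Hy _).
  simpl; auto.
Qed.

Lemma valid_T A : totally_reflexive M -> valid M (Imp A (Neg (Cond A Bot))).
Proof.
  intros Hrefl x HA H.
  destruct (Hrefl x) as [alpha [Ha Hx]].
  exact (proj1 (forces_Cond_Bot x A) H alpha x Ha Hx HA).
Qed.

Lemma valid_W A B :
  totally_reflexive M -> weakly_centered M -> valid M (Imp (Cond A B) (Imp A B)).
Proof.
  intros Hrefl Hcent x H HA.
  destruct (Hrefl x) as [alpha [Ha Hx]].
  destruct (H alpha Ha (ex_intro _ x (conj Hx HA))) as [beta [Hbeta [_ [_ HB]]]].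
  exact (HB x (Hcent x beta Hbeta) HA).
Qed.

Lemma valid_C A B : centered M -> valid M (Imp (And A B) (Cond A B)).
Proof.
  intros [Hcent Hsingle] x [HA HB] alpha Ha _.
  exists (fun y => y = x); split; [apply Hsingle |]; split.
  - intros y ->; exact (Hcent x alpha Ha).
  - split; [exists x; split; [reflexivity | exact HA] | intros y -> _; exact HB].
Qed.

Lemma forces_Cond_Bot_uniform x alpha y C :
  uniform M -> N M x alpha -> alpha y ->
  forces M x (Cond C Bot) <-> forces M y (Cond C Bot).
Proof.
  intros Hunif Ha Hy; rewrite !forces_Cond_Bot.
  split; intros H gamma z Hg Hz.
  - destruct (proj2 (Hunif x alpha y Ha Hy z) (ex_intro _ gamma (conj Hg Hz)))
      as [delta [Hd Hdz]].
    exact (H delta z Hd Hdz).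
  - destruct (proj1 (Hunif x alpha y Ha Hy z) (ex_intro _ gamma (conj Hg Hz)))
      as [delta [Hd Hdz]].
    exact (H delta z Hd Hdz).
Qed.

Lemma valid_U1 C :
  uniform M -> valid M (Imp (Cond C Bot) (Cond (Neg (Cond C Bot)) Bot)).
Proof.
  intros Hunif x H.
  apply forces_Cond_Bot; intros alpha y Ha Hy Hn.
  exact (Hn (proj1 (forces_Cond_Bot_uniform x alpha y C Hunif Ha Hy) H)).
Qed.

Lemma valid_U2 C :
  uniform M -> valid M (Imp (Neg (Cond C Bot)) (Cond (Cond C Bot) Bot)).
Proof.
  intros Hunif x Hn.
  apply forces_Cond_Bot; intros alpha y Ha Hy H.
  exact (Hn (proj2 (forces_Cond_Bot_uniform x alpha y C Hunif Ha Hy) H)).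
Qed.

Lemma forces_Cond_absolute x alpha y A B :
  absolute M -> N M x alpha -> alpha y ->
  forces M x (Cond A B) <-> forces M y (Cond A B).
Proof. intros Habs Ha Hy; simpl; rewrite (Habs x alpha y Ha Hy); reflexivity. Qed.

Lemma valid_A1 A B C :
  absolute M -> valid M (Imp (Cond A B) (Cond C (Cond A B))).
Proof.
  intros Habs x H; apply forces_Cond_of_neighbourhoods; intros alpha y Ha Hy.
  exact (proj1 (forces_Cond_absolute x alpha y A B Habs Ha Hy) H).
Qed.

Lemma valid_A2 A B C :
  absolute M -> valid M (Imp (Neg (Cond A B)) (Cond C (Neg (Cond A B)))).
Proof.
  intros Habs x Hn; apply forces_Cond_of_neighbourhoods; intros alpha y Ha Hy H.
  exact (Hn (proj2 (forces_Cond_absolute x alpha y A B Habs Ha Hy) H)).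
Qed.

End Soundness.

Lemma ext_cond_normal e M : hasN e -> ext_cond e M -> normal M.
Proof. destruct e; simpl; try tauto; intro H; contradiction H; reflexivity. Qed.

Lemma ext_cond_totally_reflexive e M : hasT e -> ext_cond e M -> totally_reflexive M.
Proof. intros [-> | [-> | ->]]; simpl; tauto. Qed.

Lemma ext_cond_weakly_centered e M :
  hasW e -> ext_cond e M -> totally_reflexive M /\ weakly_centered M.
Proof. intros [-> | ->]; simpl; tauto. Qed.

Lemma ext_cond_centered e M : hasC e -> ext_cond e M -> centered M.
Proof. intros ->; simpl; tauto. Qed.

Theorem mainTheorem1 :
  forall (b : base) (e : ext) (F : form),
    derivable b e F ->
    forall M : model, in_class b e M -> valid M F.
Proof.
  intros b e F D M [Hbase Hext].
  induction D as [F Htaut | A B _ IHAB _ IHA | A B C _ IH | A B C _ IH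
                 | A | A B C | A B C | A B C | HN | A HT | A B HW | A B HC
                 | A Hb | A Hb | A B C Hb | A B C Hb].
  - exact (valid_tautology M F Htaut).
  - exact (valid_MP M A B IHAB IHA).
  - exact (valid_RCEA M A B C IH).
  - exact (valid_RCK M A B C IH).
  - apply valid_ID.
  - apply valid_RAnd.
  - apply valid_CM.
  - apply valid_OR.
  - exact (valid_N M (ext_cond_normal e M HN Hext)).
  - exact (valid_T M A (ext_cond_totally_reflexive e M HT Hext)).
  - destruct (ext_cond_weakly_centered e M HW Hext) as [Hrefl Hcent].
    exact (valid_W M A B Hrefl Hcent).
  - exact (valid_C M A B (ext_cond_centered e M HC Hext)).
  - subst b; exact (valid_U1 M (Neg A) Hbase).
  - subst b; exact (valid_U2 M A Hbase).
  - subst b; exact (valid_A1 M A B C Hbase).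
  - subst b; exact (valid_A2 M A B C Hbase).
Qed.
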